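(* Let $1\le k\le n-1$, let $I,J$ be tightly $r$-interlacing $k$-subsets of $\{1,\dots,n\}$, write $I\setminus J=\{i_1,\dots,i_r\}$ and $J\setminus I=\{j_1,\dots,j_r\}$ with $1\le i_1<j_1<i_2<j_2<\dots<i_r<j_r\le n$, and let $b_1,\dots,b_{2r}\in\mathbb{C}[[t]]$ satisfy $\sum_{l=1}^{2r}b_l=0$. Then the module $\mathbb{M}(I,J)$ (defined in the context) is a maximal Cohen–Macaulay $B_{k,n}$-module, i.e.\ it lies in $\mathrm{CM}(B_{k,n})$.
   Context: Let $\Gamma_n$ be the quiver with vertices $1,\dots,n$ arranged on a cycle (vertex $0$ is identified with vertex $n$) and arrows $x_i\colon i-1\to i$, $y_i\colon i\to i-1$ for $i=1,\dots,n$. The algebra $B_{k,n}$ is the completed path algebra of $\Gamma_n$ modulo the closure of the ideal generated by the relations $xy=yx$ and $x^k=y^{n-k}$ at every vertex. Its centre is $Z=\mathbb{C}[[t]]$ with $t=\sum_i x_iy_i$. $\mathrm{CM}(B_{k,n})$ denotes the category of (maximal) Cohen–Macaulay $B_{k,n}$-modules, which are exactly the $B_{k,n}$-modules that are free of finite rank over $Z$; such a module is a representation of $\Gamma_n$ with a free $Z$-module of the same rank at each vertex. Two $k$-subsets $I,J$ of $\{1,\dots,n\}$ are $r$-interlacing if there are $\{i_1,i_3,\dots,i_{2r-1}\}\subset I\setminus J$ and $\{i_2,i_4,\dots,i_{2r}\}\subset J\setminus I$ with $i_1<i_2<\dots<i_{2r}<i_1$ cyclically, and no larger subsets with this property; they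 are tightly $r$-interlacing if moreover $|I\cap J|=k-r$. The module $\mathbb{M}(I,J)$: at each vertex put $V_i=\mathbb{C}[[t]]\oplus\mathbb{C}[[t]]$; for $l=1,\dots,r$ set $x_{i_l}=\begin{pmatrix}t&b_{2l-1}\\0&1\end{pmatrix}$, $y_{i_l}=\begin{pmatrix}1&-b_{2l-1}\\0&t\end{pmatrix}$, $x_{j_l}=\begin{pmatrix}1&b_{2l}\\0&t\end{pmatrix}$, $y_{j_l}=\begin{pmatrix}t&-b_{2l}\\0&1\end{pmatrix}$; for $i\notin I\cup J$ set $x_i=tE$, $y_i=E$; for $i\in I\cap J$ set $x_i=E$, $y_i=tE$, where $E$ is the $2\times2$ identity matrix. *)

From HB Require Import structures.
From mathcomp Require Import all_boot all_order all_algebra.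
From mathcomp Require Import finmap.
From mathcomp Require Import boolp.
From mathcomp Require Import complex.
From mathcomp Require Import Rstruct.
From Stdlib Require Rdefinitions.

Set Implicit Arguments.
Unset Strict Implicit.
Unset Printing Implicit Defensive.

Import GRing.Theory.
Local Open Scope ring_scope.

Record fps (K : Type) := FPS { fcoef : nat -> K }.

Section FPS.
Variable K : comNzRingType.

HB.instance Definition _ := gen_eqMixin (fps K).
HB.instance Definition _ := gen_choiceMixin (fps K).

Lemma fpsP (f g : fps K) : (forall n, fcoef f n = fcoef g n) -> f = g.
Proof. by case: f; case: g => g f /= H; congr FPS; apply: funext. Qed.

Definition fps0 : fps K := FPS (fun _ => 0).
Definition fpsopp (f : fps K) : fps K := FPS (fun n => - fcoef f n).
Definition fpsadd (f g : fps K) : fps K := FPS (fun n => fcoef f n + fcoef g n).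

Lemma fpsaddA : associative fpsadd.
Proof. by move=> f g h; apply: fpsP => n /=; rewrite addrA. Qed.
Lemma fpsaddC : commutative fpsadd.
Proof. by move=> f g; apply: fpsP => n /=; rewrite addrC. Qed.
Lemma fpsadd0 : left_id fps0 fpsadd.
Proof. by move=> f; apply: fpsP => n /=; rewrite add0r. Qed.
Lemma fpsaddN : left_inverse fps0 fpsopp fpsadd.
Proof. by move=> f; apply: fpsP => n /=; rewrite addNr. Qed.

HB.instance Definition _ :=
  GRing.isZmodule.Build (fps K) fpsaddA fpsaddC fpsadd0 fpsaddN.

Definition fps1 : fps K := FPS (fun n => (n == 0)%:R).
Definition fpsmul (f g : fps K) : fps K :=
  FPS (fun n => \sum_(i < n.+1) fcoef f i * fcoef g (n - i)).

Definition trunc (m : nat) (f : fps K) : {poly K} := \poly_(i < m) fcoef f i.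

Lemma trunc_mul (m : nat) (f g : fps K) (n : nat) : (n < m)%N ->
  (trunc m f * trunc m g)`_n = fcoef (fpsmul f g) n.
Proof.
move=> nm; rewrite coefM /=; apply: eq_bigr => i _.
rewrite !coef_poly; have ilt : (i < m)%N by apply: leq_ltn_trans nm; rewrite -ltnS.
by rewrite ilt (leq_ltn_trans (leq_subr _ _) nm).
Qed.

Lemma coefM_lowl (p q s : {poly K}) (n : nat) :
  (forall i, (i <= n)%N -> p`_i = q`_i) -> (p * s)`_n = (q * s)`_n.
Proof. by move=> H; rewrite !coefM; apply: eq_bigr => i _; rewrite H // -ltnS. Qed.

Lemma coefM_lowr (p q s : {poly K}) (n : nat) :
  (forall i, (i <= n)%N -> p`_i = q`_i) -> (s * p)`_n = (s * q)`_n.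
Proof. by move=> H; rewrite ![s * _]mulrC; apply: coefM_lowl. Qed.

Lemma fpsmulA : associative fpsmul.
Proof.
move=> f g h; apply: fpsP => n.
rewrite -(trunc_mul _ _ (ltnSn n)) -[RHS](trunc_mul _ _ (ltnSn n)).
have E1 : forall i, (i <= n)%N ->
   (trunc n.+1 (fpsmul g h))`_i = (trunc n.+1 g * trunc n.+1 h)`_i.
  by move=> i lin; rewrite trunc_mul // coef_poly ltnS lin.
have E2 : forall i, (i <= n)%N ->
   (trunc n.+1 (fpsmul f g))`_i = (trunc n.+1 f * trunc n.+1 g)`_i.
  by move=> i lin; rewrite trunc_mul // coef_poly ltnS lin.
by rewrite (coefM_lowr _ E1) (coefM_lowl _ E2) mulrA.
Qed.

Lemma fpsmulC : commutative fpsmul.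
Proof.
move=> f g; apply: fpsP => n.
by rewrite -(trunc_mul _ _ (ltnSn n)) -[RHS](trunc_mul _ _ (ltnSn n)) mulrC.
Qed.

Lemma fpsmul1 : left_id fps1 fpsmul.
Proof.
move=> f; apply: fpsP => n; rewrite -(trunc_mul _ _ (ltnSn n)).
have E : forall i, (i <= n)%N -> (trunc n.+1 fps1)`_i = (1 : {poly K})`_i.
  by move=> i lin; rewrite coef_poly ltnS lin coef1.
by rewrite (coefM_lowl _ E) mul1r coef_poly ltnSn.
Qed.

Lemma fpsmulDl : left_distributive fpsmul fpsadd.
Proof.
move=> f g h; apply: fpsP => n /=; rewrite -big_split /=.
by apply: eq_bigr => i _; rewrite mulrDl.
Qed.

Lemma fps1_neq0 : fps1 != fps0.
Proof.
apply/eqP => /(congr1 (fun f => fcoef f 0)) /= /eqP; rewrite oner_eq0; by [].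
Qed.

HB.instance Definition _ :=
  GRing.Zmodule_isComNzRing.Build (fps K) fpsmulA fpsmulC fpsmul1 fpsmulDl fps1_neq0.

Definition fpsX : fps K := FPS (fun n => (n == 1)%:R).

End FPS.

Definition CC : fieldType := (Rdefinitions.R)[i].
Definition Ct : comNzRingType := fps CC.
Definition tt_ : Ct := fpsX CC.

(* Arrows x_a : a-1 -> a and y_a : a -> a-1 are labelled by a in {1..n};
   [lab n a] reduces a positive integer a to its label in {1..n}
   (vertex 0 is identified with vertex n). *)
Definition lab (n a : nat) : nat := (a.-1 %% n).+1.

(* X a (resp. Y a) is the matrix of x_a (resp. y_a), acting on column
   vectors; composition of maps is matrix product.  Relations at a vertex
   v in {1..n}:
     - xy = yx :  x_v o y_v = y_{v+1} o x_{v+1}   (maps V_v -> V_v);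
     - the central element t = sum_i x_i y_i acts on V_v as multiplication
       by t (so that the Z-module structure is the free one C[[t]]^m);
     - x^k = y^(n-k) : x_{v+k} o ... o x_{v+1} = y_{v+k+1} o ... o y_{v+n}
       (both paths V_v -> V_{v+k}, indices mod n). *)
Definition CM_rep (n k m : nat) (X Y : nat -> 'M[Ct]_m) : Prop :=
  forall v, (1 <= v <= n)%N ->
    [/\ X (lab n v) *m Y (lab n v) = Y (lab n v.+1) *m X (lab n v.+1),
        X (lab n v) *m Y (lab n v) = tt_%:M &
        \prod_(j < k) X (lab n (v + k - j)%N) =
        \prod_(j < (n - k)%N) Y (lab n (v + k + 1 + j)%N)].

Local Open Scope fset_scope.

Definition ksubset (n k : nat) (I : {fset nat}) : Prop :=
  (forall x, x \in I -> (1 <= x <= n)%N) /\ #|` I| = k.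

Definition cyc_increasing (s : seq nat) : Prop :=
  exists p, sorted ltn (rot p s).

(* s alternates: odd positions (1st, 3rd, ...) in I \ J,
   even positions in J \ I, and s has even length. *)
Definition alternating (I J : {fset nat}) (s : seq nat) : Prop :=
  ~~ odd (size s) /\
  (forall p, (p < size s)%N ->
     if odd p then nth 0%N s p \in J `\` I else nth 0%N s p \in I `\` J) /\
  cyc_increasing s.

Definition interlacing (r : nat) (I J : {fset nat}) : Prop :=
  (exists s, size s = (2 * r)%N /\ alternating I J s) /\
  (forall s, alternating I J s -> (size s <= 2 * r)%N).

Definition tightly_interlacing (k r : nat) (I J : {fset nat}) : Prop :=
  interlacing r I J /\ #|` I `&` J| = (k - r)%N.

Local Open Scope ring_scope.

Definition mx2 (a b c d : Ct) : 'M[Ct]_2 :=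
  \matrix_(p < 2, q < 2)
    if p == 0 then (if q == 0 then a else b) else (if q == 0 then c else d).

Definition E2 : 'M[Ct]_2 := mx2 1 0 0 1.

(* i, j : nat -> nat enumerate I \ J = {i_1..i_r} and J \ I = {j_1..j_r}
   (indices 1..r), b : nat -> Ct gives b_1 .. b_{2r}. *)
Definition MIJ_x (I J : {fset nat}) (r : nat) (i j : nat -> nat)
    (b : nat -> Ct) (a : nat) : 'M[Ct]_2 :=
  if [pick l : 'I_r | i l.+1 == a] is Some l then
    mx2 tt_ (b (2 * l.+1 - 1)%N) 0 1
  else if [pick l : 'I_r | j l.+1 == a] is Some l then
    mx2 1 (b (2 * l.+1)%N) 0 tt_
  else if (a \in I) && (a \in J) then E2
  else tt_ *: E2.

Definition MIJ_y (I J : {fset nat}) (r : nat) (i j : nat -> nat)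
    (b : nat -> Ct) (a : nat) : 'M[Ct]_2 :=
  if [pick l : 'I_r | i l.+1 == a] is Some l then
    mx2 1 (- b (2 * l.+1 - 1)%N) 0 tt_
  else if [pick l : 'I_r | j l.+1 == a] is Some l then
    mx2 tt_ (- b (2 * l.+1)%N) 0 1
  else if (a \in I) && (a \in J) then tt_ *: E2
  else E2.

(* Every arrow of M(I,J) satisfies x_a y_a = y_a x_a = t, which gives the
   relations xy = yx and the action of t at once.  Since t is central and a
   non-zero-divisor, x^k = y^(n-k) reduces to the cycle x_n ... x_1 being
   t^(n-k): conjugating by x_a shows that every rotation of the cycle is then
   t^(n-k) too, and telescoping the y_a x_a = t gives
   t^(n-k) x^k = y^(n-k) x^(n-k) x^k = y^(n-k) t^(n-k).  All the matrices are
   upper triangular; the diagonal of x_m ... x_1 is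
   (t^#{a <= m | a \notin J}, t^#{a <= m | a \notin I}), i.e. (t^(n-k), t^(n-k))
   for m = n, and its corner entry is governed by the partial sums of the b_l
   met so far, so it vanishes at m = n because the b_l sum to 0. *)

From HB Require Import structures.
From mathcomp Require Import all_boot all_order all_algebra.
From mathcomp Require Import finmap.
From mathcomp Require Import zify ring.
Import GRing.Theory.

Set Implicit Arguments.
Unset Strict Implicit.
Unset Printing Implicit Defensive.

Local Open Scope ring_scope.

Section CyclicProducts.

Variables (A : nzRingType) (c : A) (x y : nat -> A).
Hypothesis c_central : forall a, GRing.comm c a.
Hypothesis c_lreg : GRing.lreg c.
Hypothesis x_mul_y : forall a, x a * y a = c.
Hypothesis y_mul_x : forall a, y a * x a = c.

Lemma commrX_central m a : GRing.comm (c ^+ m) a.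
Proof. exact/commr_sym/commrX/commr_sym/c_central. Qed.

Lemma prod_y_mul_prod_x m w :
  \prod_(q < m) y (w + 1 + q)%N * \prod_(q < m) x (w + m - q)%N = c ^+ m.
Proof.
elim: m w => [|m IH] w; first by rewrite !big_ord0 mulr1.
rewrite big_ord_recl big_ord_recr /=.
have -> : \prod_(q < m) y (w + 1 + bump 0 q)%N = \prod_(q < m) y (w.+1 + 1 + q)%N.
  by apply: eq_bigr => q _; congr y; rewrite /bump; lia.
have -> : \prod_(q < m) x (w + m.+1 - widen_ord (leqnSn m) q)%N =
          \prod_(q < m) x (w.+1 + m - q)%N.
  by apply: eq_bigr => q _; congr x; rewrite /=; lia.
have -> : (w + m.+1 - @ord_max m)%N = (w + 1)%N by rewrite /=; lia.
rewrite addn0 -mulrA (mulrA (\prod_(q < m) _)) IH mulrA.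
by rewrite -(commrX_central m) -mulrA y_mul_x -exprSr.
Qed.

Lemma prod_x_rotate n e :
    (forall a, (0 < a)%N -> x (a + n)%N = x a) ->
    \prod_(q < n) x (n - q)%N = c ^+ e ->
  forall v, \prod_(q < n) x (v + n - q)%N = c ^+ e.
Proof.
case: n => [|n] x_periodic P0 v; first by rewrite -P0 !big_ord0.
elim: v => [|v IH]; first by rewrite add0n.
rewrite big_ord_recl /= subn0 x_periodic //.
move: IH; rewrite big_ord_recr /=.
have -> : \prod_(q < n) x (v + n.+1 - widen_ord (leqnSn n) q)%N =
          \prod_(q < n) x (v.+1 + n.+1 - bump 0 q)%N.
  by apply: eq_bigr => q _; congr x; rewrite /bump /=; lia.
have -> : (v + n.+1 - @ord_max n)%N = v.+1 by rewrite /=; lia.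
set Q := \prod_(q < n) _ => IH.
apply: c_lreg; rewrite c_central -(x_mul_y v.+1) !mulrA -(mulrA _ Q) IH.
by rewrite -commrX_central -mulrA x_mul_y c_central.
Qed.

Lemma prod_x_eq_prod_y n k : (k <= n)%N ->
    (forall v, \prod_(q < n) x (v + n - q)%N = c ^+ (n - k)) ->
  forall v, \prod_(q < k) x (v + k - q)%N = \prod_(q < n - k) y (v + k + 1 + q)%N.
Proof.
move=> le_kn; have [m ->] : exists m, n = (m + k)%N by exists (n - k)%N; rewrite subnK.
rewrite addnK => P v; apply: (lregX (n := m) c_lreg).
rewrite -{1}(prod_y_mul_prod_x m (v + k)) -mulrA commrX_central -(P v).
congr (_ * _); rewrite big_split_ord; congr (_ * _).
  by apply: eq_bigr => q _; congr x; rewrite /=; lia.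
by apply: eq_bigr => q _; congr x; rewrite /=; lia.
Qed.

End CyclicProducts.

Lemma lreg_scalar_mx (R : comNzRingType) m (a : R) :
  GRing.lreg a -> GRing.lreg (a%:M : 'M[R]_m.+1).
Proof.
move=> a_lreg A B; rewrite -!mulmxE !mul_scalar_mx => /matrixP eqAB.
by apply/matrixP => p q; apply: a_lreg; have := eqAB p q; rewrite !mxE.
Qed.

Lemma central_scalar_mx (R : comNzRingType) m (a : R) (A : 'M[R]_m.+1) :
  GRing.comm a%:M A.
Proof. by rewrite /GRing.comm -!mulmxE scalar_mxC. Qed.

Lemma coef_mul_t (f : Ct) m : fcoef (tt_ * f) m.+1 = fcoef f m.
Proof.
have -> : fcoef (tt_ * f) m.+1 = (trunc m.+2 tt_ * trunc m.+2 f)`_m.+1.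
  by rewrite trunc_mul.
have -> : trunc m.+2 tt_ = 'X.
  by apply/polyP => q; rewrite coef_poly coefX; case: ltnP => // ?; case: eqP => //; lia.
by rewrite coefXM coef_poly /= ltnS leqnSn.
Qed.

Lemma lreg_t : GRing.lreg tt_.
Proof. by move=> f g eq_tf; apply: fpsP => m; rewrite -!(coef_mul_t _ m) eq_tf. Qed.

Lemma mx2_mul (a b c d a' b' c' d' : Ct) :
  mx2 a b c d *m mx2 a' b' c' d' =
  mx2 (a * a' + b * c') (a * b' + b * d') (c * a' + d * c') (c * b' + d * d').
Proof.
apply/matrixP => p q; rewrite !mxE !big_ord_recr big_ord0 /= add0r !mxE.
by case: p q => [[|[|//]] ?] [[|[|//]] ?].
Qed.

Lemma scalar_mx2 (a : Ct) : a%:M = mx2 a 0 0 a.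
Proof. by apply/matrixP => -[[|[|//]] ?] [[|[|//]] ?]; rewrite !mxE. Qed.

Lemma scale_E2 (a : Ct) : a *: E2 = mx2 a 0 0 a.
Proof. by apply/matrixP => -[[|[|//]] ?] [[|[|//]] ?]; rewrite !mxE ?mulr1 ?mulr0. Qed.

Lemma E2_id : E2 = 1%:M.
Proof. by rewrite scalar_mx2. Qed.

Lemma MIJ_x_mul_y I J r i j b a :
  MIJ_x I J r i j b a *m MIJ_y I J r i j b a = tt_%:M.
Proof.
rewrite /MIJ_x /MIJ_y scalar_mx2.
case: pickP => [l _|_]; last case: pickP => [l _|_]; last case: ifP => _;
  rewrite ?scale_E2 /E2 mx2_mul; congr mx2; ring.
Qed.

Lemma MIJ_y_mul_x I J r i j b a :
  MIJ_y I J r i j b a *m MIJ_x I J r i j b a = tt_%:M.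
Proof.
rewrite /MIJ_x /MIJ_y scalar_mx2.
case: pickP => [l _|_]; last case: pickP => [l _|_]; last case: ifP => _;
  rewrite ?scale_E2 /E2 mx2_mul; congr mx2; ring.
Qed.

Definition count_notin (A : {fset nat}) m := count (fun a => a \notin A) (iota 1 m).

Lemma count_notinS A m : count_notin A m.+1 = (count_notin A m + (m.+1 \notin A))%N.
Proof.
have iotaS : iota 1 m.+1 = iota 1 m ++ [:: m.+1] by rewrite -(iotaD 1 m 1) addn1.
by rewrite /count_notin iotaS count_cat /= addn0.
Qed.

Lemma count_notin_card (A : {fset nat}) n :
  (forall a, a \in A -> (1 <= a <= n)%N) -> count_notin A n = (n - #|` A|)%N.
Proof.
move=> A_bd; have : (count (fun a => a \in A) (iota 1 n) + count_notin A n)%N = n.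
  by rewrite -[RHS](size_iota 1) -(count_predC (fun a => a \in A)).
suff -> : count (fun a => a \in A) (iota 1 n) = #|` A| by lia.
rewrite -size_filter; apply: perm_size; apply: uniq_perm.
- by rewrite filter_uniq // iota_uniq.
- exact: fset_uniq.
move=> a; rewrite mem_filter mem_iota.
apply/and3P/idP => [[]//|aA]; split=> //; have := A_bd a aA; lia.
Qed.

Lemma natr_leqS (R : nzSemiRingType) (a m : nat) :
  ((a <= m.+1)%N%:R : R) = (a <= m)%N%:R + (a == m.+1)%:R.
Proof.
case: (ltngtP a m.+1) => [lt_am|lt_ma|->]; last by rewrite ltnn add0r.
  by rewrite -ltnS lt_am addr0.
by rewrite leqNgt (ltn_trans (ltnSn m) lt_ma) addr0.
Qed.

Lemma sum_consecutive_pairs (R : nmodType) (b : nat -> R) r :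
  \sum_(l < r) (b (2 * l.+1 - 1)%N + b (2 * l.+1)%N) = \sum_(1 <= l < (2 * r).+1) b l.
Proof.
elim: r => [|r IH]; first by rewrite big_ord0 big_geq.
rewrite big_ord_recr /= IH.
have -> : (2 * r.+1).+1 = ((2 * r).+1).+2 by lia.
rewrite (big_nat_recr (2 * r).+2) // (big_nat_recr (2 * r).+1) // addrA.
by congr (_ + b _ + b _); lia.
Qed.

Section Interlacing.

Variables (n r : nat) (I J : {fset nat}) (i j : nat -> nat) (b : nat -> Ct).
Hypothesis I_minus_J :
  forall x, x \in (I `\` J)%fset <-> exists2 l, (1 <= l <= r)%N & x = i l.
Hypothesis J_minus_I :
  forall x, x \in (J `\` I)%fset <-> exists2 l, (1 <= l <= r)%N & x = j l.
Hypothesis ij_bounds :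
  forall l, (1 <= l <= r)%N -> (1 <= i l)%N /\ (i l < j l)%N /\ (j l <= n)%N.
Hypothesis j_lt_i_succ : forall l, (1 <= l < r)%N -> (j l < i l.+1)%N.

Lemma ij_bounds_ord (l : 'I_r) :
  (1 <= i l.+1)%N /\ (i l.+1 < j l.+1)%N /\ (j l.+1 <= n)%N.
Proof. exact/ij_bounds/ltn_ord. Qed.

Lemma j_lt_i l l' : (1 <= l)%N -> (l < l' <= r)%N -> (j l < i l')%N.
Proof.
move=> l_gt0; elim: l' => // l' IH /andP[]; rewrite ltnS leq_eqVlt.
case/orP=> [/eqP <- lt_lr|lt_ll' le_l'r]; first by apply: j_lt_i_succ; lia.
have := IH; rewrite lt_ll' ltnW // => /(_ isT); have := j_lt_i_succ (l := l').
have := ij_bounds (l := l'); lia.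
Qed.

Lemma ord_separated (l l' : 'I_r) :
  l = l' \/ (j l.+1 < i l'.+1)%N \/ (j l'.+1 < i l.+1)%N.
Proof.
case: (ltngtP l l') => [lt_ll'|lt_l'l|/val_inj]; [right; left|right; right|by left];
  by apply: j_lt_i; rewrite // ltnS ?lt_ll' ?lt_l'l ltn_ord.
Qed.

Lemma i_inj : injective (fun l : 'I_r => i l.+1).
Proof.
move=> l l' /= eq_i; have := ij_bounds_ord l; have := ij_bounds_ord l'.
case: (ord_separated l l') => [|[]] //; lia.
Qed.

Lemma j_inj : injective (fun l : 'I_r => j l.+1).
Proof.
move=> l l' /= eq_j; have := ij_bounds_ord l; have := ij_bounds_ord l'.
case: (ord_separated l l') => [|[]] //; lia.
Qed.

Lemma i_neq_j (l l' : 'I_r) : i l.+1 != j l'.+1.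
Proof.
have := ij_bounds_ord l; have := ij_bounds_ord l'.
by case: (ord_separated l l') => [->|[]] *; apply/eqP; lia.
Qed.

Lemma i_mem (l : 'I_r) : (i l.+1 \in I) && (i l.+1 \notin J).
Proof.
have : i l.+1 \in (I `\` J)%fset by apply/I_minus_J; exists l.+1; rewrite ?ltn_ord.
by rewrite in_fsetD andbC.
Qed.

Lemma j_mem (l : 'I_r) : (j l.+1 \in J) && (j l.+1 \notin I).
Proof.
have : j l.+1 \in (J `\` I)%fset by apply/J_minus_I; exists l.+1; rewrite ?ltn_ord.
by rewrite in_fsetD andbC.
Qed.

Definition not_ij a := forall l : 'I_r, i l.+1 != a /\ j l.+1 != a.

Lemma vertex_cases a :
  [\/ exists L : 'I_r, a = i L.+1, exists L : 'I_r, a = j L.+1 |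
      not_ij a /\ (a \in I) = (a \in J)].
Proof.
have ord_of l : (1 <= l <= r)%N -> exists L : 'I_r, l = L.+1.
  by case: l => // l lr; exists (Ordinal lr).
case: (boolP (a \in (I `\` J)%fset)) => [/I_minus_J[l /ord_of[L ->] ->]|aIJ].
  by apply: Or31; exists L.
case: (boolP (a \in (J `\` I)%fset)) => [/J_minus_I[l /ord_of[L ->] ->]|aJI].
  by apply: Or32; exists L.
apply: Or33; split.
  move=> l; split; apply/eqP => eq_a.
    by move: aIJ; rewrite -eq_a in_fsetD andbC i_mem.
  by move: aJI; rewrite -eq_a in_fsetD andbC j_mem.
by move: aIJ aJI; rewrite !in_fsetD; case: (a \in I); case: (a \in J).
Qed.

Local Notation x := (MIJ_x I J r i j b).

Lemma MIJ_x_i (L : 'I_r) : x (i L.+1) = mx2 tt_ (b (2 * L.+1 - 1)%N) 0 1.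
Proof.
rewrite /MIJ_x; case: pickP => [l /eqP/i_inj -> //|/(_ L)].
by rewrite eqxx.
Qed.

Lemma MIJ_x_j (L : 'I_r) : x (j L.+1) = mx2 1 (b (2 * L.+1)%N) 0 tt_.
Proof.
rewrite /MIJ_x; case: pickP => [l /eqP eq_ij|_]; first by case/eqP: (i_neq_j l L).
case: pickP => [l /eqP/j_inj -> //|/(_ L)].
by rewrite eqxx.
Qed.

Lemma MIJ_x_not_ij a : not_ij a ->
  x a = if (a \in I) && (a \in J) then E2 else tt_ *: E2.
Proof.
move=> a_not_ij; rewrite /MIJ_x.
case: pickP => [l|_]; first by case: (a_not_ij l) => /negbTE ->.
by case: pickP => [l|_] //; case: (a_not_ij l) => _ /negbTE ->.
Qed.

Definition inside m := [exists l : 'I_r, i l.+1 <= m < j l.+1]%N.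

Lemma inside0 : ~~ inside 0.
Proof. by apply/existsP => -[l]; have := ij_bounds_ord l; lia. Qed.

Lemma inside_at_i (L : 'I_r) m : m.+1 = i L.+1 -> ~~ inside m /\ inside m.+1.
Proof.
move=> eq_m; split; last by apply/existsP; exists L; have := ij_bounds_ord L; lia.
apply/existsP => -[l]; have := ij_bounds_ord l; have := ij_bounds_ord L.
by case: (ord_separated l L) => [->|[]]; lia.
Qed.

Lemma inside_at_j (L : 'I_r) m : m.+1 = j L.+1 -> inside m /\ ~~ inside m.+1.
Proof.
move=> eq_m; split; first by apply/existsP; exists L; have := ij_bounds_ord L; lia.
apply/existsP => -[l]; have := ij_bounds_ord l; have := ij_bounds_ord L.
by case: (ord_separated l L) => [->|[]]; lia.
Qed.

Lemma inside_not_ij m : not_ij m.+1 -> inside m.+1 = inside m.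
Proof.
move=> m_not_ij; apply/existsP/existsP => -[l]; exists l.
all: by have [/eqP ? /eqP ?] := m_not_ij l; lia.
Qed.

Lemma count_notin_inside m : count_notin J m = (count_notin I m + inside m)%N.
Proof.
elim: m => [|m IH]; first by rewrite (negbTE inside0).
rewrite !count_notinS.
case: (vertex_cases m.+1) => [[L eq_m]|[L eq_m]|[m_not_ij eq_IJ]].
- have [/negbTE in_m in_m1] := inside_at_i eq_m; have /andP[iI iJ] := i_mem L.
  by move: IH; rewrite in_m in_m1 eq_m iI iJ /=; lia.
- have [in_m /negbTE in_m1] := inside_at_j eq_m; have /andP[jJ jI] := j_mem L.
  by move: IH; rewrite in_m in_m1 eq_m jJ jI /=; lia.
- by rewrite inside_not_ij // IH eq_IJ; lia.
Qed.

Definition partial_bsum m : Ct :=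
  \sum_(l < r) ((i l.+1 <= m)%N%:R * b (2 * l.+1 - 1)%N +
                (j l.+1 <= m)%N%:R * b (2 * l.+1)%N).

Lemma partial_bsum0 : partial_bsum 0 = 0.
Proof.
rewrite /partial_bsum big1 // => l _; have := ij_bounds_ord l => -[i_gt0 [lt_ij _]].
by rewrite leqNgt i_gt0 leqNgt (ltn_trans i_gt0 lt_ij) !mul0r addr0.
Qed.

Lemma partial_bsumS m : partial_bsum m.+1 = partial_bsum m +
  \sum_(l < r) ((i l.+1 == m.+1)%:R * b (2 * l.+1 - 1)%N +
                (j l.+1 == m.+1)%:R * b (2 * l.+1)%N).
Proof.
by rewrite -big_split; apply: eq_bigr => l _ /=; rewrite !natr_leqS !mulrDl addrACA.
Qed.

Lemma partial_bsum_at_i (L : 'I_r) m :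
  m.+1 = i L.+1 -> partial_bsum m.+1 = partial_bsum m + b (2 * L.+1 - 1)%N.
Proof.
move=> eq_m; rewrite partial_bsumS (bigD1 L) // big1 => [|l neq_lL].
  by rewrite eq_m eqxx [j _ == _]eq_sym (negbTE (i_neq_j L L)) mul1r mul0r /= !addr0.
rewrite eq_m (inj_eq i_inj) (negbTE neq_lL) [j _ == _]eq_sym (negbTE (i_neq_j L l)).
by rewrite !mul0r addr0.
Qed.

Lemma partial_bsum_at_j (L : 'I_r) m :
  m.+1 = j L.+1 -> partial_bsum m.+1 = partial_bsum m + b (2 * L.+1)%N.
Proof.
move=> eq_m; rewrite partial_bsumS (bigD1 L) // big1 => [|l neq_lL].
  by rewrite eq_m eqxx (negbTE (i_neq_j L L)) mul1r mul0r /= add0r !addr0.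
rewrite eq_m (inj_eq j_inj) (negbTE neq_lL) (negbTE (i_neq_j l L)).
by rewrite !mul0r addr0.
Qed.

Lemma partial_bsum_not_ij m : not_ij m.+1 -> partial_bsum m.+1 = partial_bsum m.
Proof.
move=> m_not_ij; rewrite partial_bsumS big1 ?addr0 // => l _.
by have [/negbTE -> /negbTE ->] := m_not_ij l; rewrite !mul0r addr0.
Qed.

Lemma partial_bsum_n : partial_bsum n = \sum_(1 <= l < (2 * r).+1) b l.
Proof.
rewrite -sum_consecutive_pairs; apply: eq_bigr => l _.
have [_ [lt_ij le_jn]] := ij_bounds_ord l.
by rewrite le_jn (ltnW (leq_trans lt_ij le_jn)) !mul1r.
Qed.

Definition prefix_prod m : 'M[Ct]_2 := \prod_(q < m) x (m - q)%N.

Lemma prefix_prodS m : prefix_prod m.+1 = x m.+1 *m prefix_prod m.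
Proof. by rewrite /prefix_prod big_ord_recl mulmxE subn0. Qed.

(* For positive exponent, g = t^(#{a <= m | a \notin J} - 1) times the partial
   sum; stating it for t * g avoids the truncated subtraction. *)
Lemma prefix_prod_triangular m :
  exists2 g, prefix_prod m = mx2 (tt_ ^+ count_notin J m) g 0 (tt_ ^+ count_notin I m)
           & tt_ * g = tt_ ^+ count_notin J m * partial_bsum m.
Proof.
elim: m => [|m [g Pm tg]].
  by exists 0; rewrite ?partial_bsum0 ?mulr0 // /prefix_prod big_ord0 -scalar_mx2.
have cnt := count_notin_inside m; rewrite prefix_prodS Pm !count_notinS.
case: (vertex_cases m.+1) => [[L eq_m]|[L eq_m]|[m_not_ij eq_IJ]].
- have [/negbTE in_m _] := inside_at_i eq_m; have /andP[iI iJ] := i_mem L.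
  rewrite in_m addn0 in cnt.
  rewrite (partial_bsum_at_i eq_m) eq_m MIJ_x_i iI iJ -cnt addn1 addn0.
  exists (tt_ * g + b (2 * L.+1 - 1)%N * tt_ ^+ count_notin J m).
    by rewrite mx2_mul; congr mx2; rewrite ?exprS; ring.
  by rewrite mulrDr tg exprS; ring.
- have [in_m _] := inside_at_j eq_m; have /andP[jJ jI] := j_mem L.
  rewrite in_m addn1 in cnt.
  rewrite (partial_bsum_at_j eq_m) eq_m MIJ_x_j jJ jI cnt addn1 addn0.
  exists (g + b (2 * L.+1)%N * tt_ ^+ count_notin I m).
    by rewrite mx2_mul; congr mx2; rewrite ?exprS; ring.
  by rewrite mulrDr tg cnt !exprS; ring.
- rewrite partial_bsum_not_ij // MIJ_x_not_ij // -eq_IJ andbb.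
  case: ifP => _.
    by exists g; rewrite ?E2_id ?mul1mx ?addn0.
  exists (tt_ * g); last by rewrite tg !addn1 exprS; ring.
  by rewrite scale_E2 mx2_mul !addn1; congr mx2; rewrite ?exprS; ring.
Qed.

Lemma prefix_prod_full k :
  ksubset n k I -> ksubset n k J -> \sum_(1 <= l < (2 * r).+1) b l = 0 ->
  prefix_prod n = (tt_ ^+ (n - k))%:M.
Proof.
move=> [I_bd I_card] [J_bd J_card] sum_b.
have [g -> tg] := prefix_prod_triangular n.
have -> : g = 0 by apply: lreg_t; rewrite tg partial_bsum_n sum_b !mulr0.
by rewrite !count_notin_card // I_card J_card scalar_mx2.
Qed.

End Interlacing.

Lemma lab_id n a : (1 <= a <= n)%N -> lab n a = a.
Proof. by move=> a_bd; rewrite /lab modn_small; lia. Qed.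

Lemma lab_periodic n a : (0 < a)%N -> lab n (a + n) = lab n a.
Proof.
by move=> a_gt0; rewrite /lab (_ : (a + n).-1 = a.-1 + n)%N ?modnDr //; lia.
Qed.

Local Close Scope ring_scope.

Theorem proposition3p1 (n k r : nat) (I J : {fset nat})
    (i j : nat -> nat) (b : nat -> Ct) :
  (1 <= k <= n - 1)%N ->
  ksubset n k I -> ksubset n k J ->
  tightly_interlacing k r I J ->
  (* I \ J = {i_1, ..., i_r} and J \ I = {j_1, ..., j_r} *)
  (forall x, x \in (I `\` J)%fset <-> exists2 l, (1 <= l <= r)%N & x = i l) ->
  (forall x, x \in (J `\` I)%fset <-> exists2 l, (1 <= l <= r)%N & x = j l) ->
  (* 1 <= i_1 < j_1 < i_2 < j_2 < ... < i_r < j_r <= n *)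
  (forall l, (1 <= l <= r)%N -> (1 <= i l)%N /\ (i l < j l)%N /\ (j l <= n)%N) ->
  (forall l, (1 <= l < r)%N -> (j l < i l.+1)%N) ->
  (\sum_(1 <= l < (2 * r).+1) b l)%R = 0%R ->
  CM_rep n k (MIJ_x I J r i j b) (MIJ_y I J r i j b).
Proof.
move=> k_bd kI kJ _ I_minus_J J_minus_I ij_bounds j_lt_i_succ sum_b.
pose x a := MIJ_x I J r i j b (lab n a); pose y a := MIJ_y I J r i j b (lab n a).
have t_central := @central_scalar_mx Ct 1 tt_.
have t_lreg := lreg_scalar_mx (m := 1) lreg_t.
have x_mul_y a : (x a * y a = tt_%:M)%R by rewrite -mulmxE MIJ_x_mul_y.
have y_mul_x a : (y a * x a = tt_%:M)%R by rewrite -mulmxE MIJ_y_mul_x.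
have x_periodic a : 0 < a -> x (a + n) = x a by move=> a_gt0; rewrite /x lab_periodic.
have x_cycle : (\prod_(q < n) x (n - q)%N = tt_%:M ^+ (n - k))%R.
  have -> : (tt_%:M ^+ (n - k) = (tt_ ^+ (n - k))%:M :> 'M[Ct]_2)%R by rewrite rmorphXn.
  rewrite -(prefix_prod_full I_minus_J J_minus_I ij_bounds j_lt_i_succ kI kJ sum_b).
  by apply: eq_bigr => q _; rewrite /x lab_id // subn_gt0 ltn_ord leq_subr.
have x_cycles := prod_x_rotate t_central t_lreg x_mul_y x_periodic x_cycle.
move=> v _; split; rewrite ?MIJ_x_mul_y ?MIJ_y_mul_x //.
by apply: (prod_x_eq_prod_y t_central t_lreg y_mul_x _ x_cycles); lia.
Qed.
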